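(* Let $G=(V,A)$, $\Xi$ and $\mathcal{S}^1$ be as in the context. Let $\bar{T}$ be a tree in the undirected graph $\bar{G}$ underlying $G$ with node set $\widetilde{\mathcal{I}}\subseteq V$, and let $l\in A$ be an arc that is incident to exactly one node of $\bar{T}$. Then for any partition $\widetilde{\mathcal{I}}_1,\widetilde{\mathcal{I}}_2$ of $\widetilde{\mathcal{I}}$ (i.e. $\widetilde{\mathcal{I}}_1\cap\widetilde{\mathcal{I}}_2=\emptyset$, $\widetilde{\mathcal{I}}_1\cup\widetilde{\mathcal{I}}_2=\widetilde{\mathcal{I}}$): (i) if $h(l)\in\widetilde{\mathcal{I}}$, then $[\{i^+\}_{i\in\widetilde{\mathcal{I}}_1},\{i^-\}_{i\in\widetilde{\mathcal{I}}_2}]$ is an EC\&R assignment for class-$l^+$; (ii) if $h(l)\in\widetilde{\mathcal{I}}$, then $[\{i^-\}_{i\in\widetilde{\mathcal{I}}_1},\{i^+\}_{i\in\widetilde{\mathcal{I}}_2}]$ is an EC\&R assignment for class-$l^-$; (iii) if $t(l)\in\widetilde{\mathcal{I}}$, then $[\{i^-\}_{i\in\widetilde{\mathcal{I}}_1},\{i^+\}_{i\in\widetilde{\mathcal{I}}_2}]$ is an EC\&R assignment for class-$l^+$; (iv) if $t(l)\in\widetilde{\mathcal{I}}$, then $[\{i^+\}_{i\in\widetilde{\mathcal{I}}_1},\{i^-\}_{i\in\widetilde{\mathcal{I}}_2}]$ is an EC\&R assignment for class-$l^-$.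
   Context: $G=(V,A)$ is a directed network; its arcs are identified with $N=\{1,\dots,n\}$, $x_a$ is the flow on arc $a$, $t(a)$ and $h(a)$ are the tail and head of $a$, and $\delta^+(v),\delta^-(v)$ are the outgoing and incoming arcs of node $v$. $\Xi=\{x\in\mathbb{R}^n: Ex\ge f,\ 0\le x\le u\}$ where the rows $E_{t\cdot}x\ge f_t$, $t\in T$, are: for each $v\in V$, the positive flow-balance inequality (index $v^+$) $\sum_{a\in\delta^+(v)}x_a-\sum_{a\in\delta^-(v)}x_a\ge f_v$ and the negative flow-balance inequality (index $v^-$) $-\sum_{a\in\delta^+(v)}x_a+\sum_{a\in\delta^-(v)}x_a\ge -f_v$; $u$ is the capacity vector. $\mathcal{S}^1=\{(x,y_1,z)\in\Xi\times[0,1]\times\mathbb{R}^A : y_1x_k=z_k\ \forall k\in A\}$. EC\&R assignment (case of a single $y$ variable): a class is a pair $l\in A$ and sign $\sigma\in\{+,-\}$ (class-$l^\sigma$). A pair $[\mathcal{I}_1,\bar{\mathcal{I}}]$ of disjoint subsets of $T$ is an EC\&R assignment for class-$l^\sigma$ if there are positive weights $\gamma_t$ ($t\in\mathcal{I}_1$), $\theta_t$ ($t\in\bar{\mathcal{I}}$) such that, when one sums the base equality $y_1x_l-z_l=0$ multiplied by $+1$ (if $\sigma=+$) or $-1$ (if $\sigma=-$), the inequalities $\gamma_t\,y_1(E_{t\cdot}x-f_t)\ge 0$ for $t\in\mathcal{I}_1$, and $\theta_t(1-y_1)(E_{t\cdot}x-f_t)\ge0$ for $t\in\bar{\mathcal{I}}$,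 the following hold: (C1) at least $|\mathcal{I}_1|+|\bar{\mathcal{I}}|$ bilinear terms $y_1x_i$ are canceled (have coefficient zero in the sum although they appear in some summand); (C2) if $\mathcal{I}_1\cup\bar{\mathcal{I}}\neq\emptyset$, then for each constraint used in the sum (including the base equality), at least one of the bilinear terms created by multiplying it with its weight is canceled. *)

From HB Require Import structures.
From mathcomp Require Import all_boot all_order all_algebra.
From mathcomp Require Import reals.
Set Implicit Arguments. Unset Strict Implicit. Unset Printing Implicit Defensive.
Import Order.TTheory GRing.Theory Num.Theory.
Local Open Scope ring_scope.

Section Network.
Variables (R : realType) (V A : finType) (tl hd : A -> V).

(* Row index set T = V x {+,-}; (v,true) is v^+, (v,false) is v^-. *)
(* Coefficient of x_a in the row E_{t.} of the flow-balance system. *)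
Definition Erow (tr : V * bool) (a : A) : R :=
  (if tr.2 then 1 else -1) *
  (((tl a == tr.1)%:R : R) - ((hd a == tr.1)%:R : R)).

(* Coefficient of the bilinear term y_1 x_a in the aggregated sum:
   sigma*(y x_l - z_l) + sum_{t in I1} gamma_t y (E_t x - f_t)
   + sum_{t in Ib} theta_t (1-y)(E_t x - f_t). *)
Definition total_coef (l : A) (sigma : bool) (I1 Ib : {set V * bool})
    (gamma theta : V * bool -> R) (a : A) : R :=
  (if a == l then (if sigma then 1 else -1) else 0)
  + \sum_(t in I1) gamma t * Erow t a
  - \sum_(t in Ib) theta t * Erow t a.

Definition appears (l : A) (I1 Ib : {set V * bool})
    (gamma theta : V * bool -> R) (a : A) : bool :=
  [|| a == l, [exists t in I1, gamma t * Erow t a != 0]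
    | [exists t in Ib, - theta t * Erow t a != 0]].

Definition canceled l sigma I1 Ib gamma theta (a : A) : bool :=
  appears l I1 Ib gamma theta a && (total_coef l sigma I1 Ib gamma theta a == 0).

(* [I1, Ib] is an EC&R assignment for class-l^sigma (single y variable). *)
Definition ECR_assignment (l : A) (sigma : bool) (I1 Ib : {set V * bool}) : Prop :=
  [disjoint I1 & Ib] /\
  exists gamma theta : V * bool -> R,
    (forall t, t \in I1 -> 0 < gamma t) /\
    (forall t, t \in Ib -> 0 < theta t) /\
    (#|I1| + #|Ib| <= #|[set a | canceled l sigma I1 Ib gamma theta a]|)%N /\
    (I1 :|: Ib != set0 ->
       (* base equality: its only created bilinear term is y x_l *)
       canceled l sigma I1 Ib gamma theta l /\
       (forall t, t \in I1 -> exists a,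
           canceled l sigma I1 Ib gamma theta a && (gamma t * Erow t a != 0)) /\
       (forall t, t \in Ib -> exists a,
           canceled l sigma I1 Ib gamma theta a && (- theta t * Erow t a != 0))).

Definition adjF (F : {set A}) : rel V :=
  fun u v => [exists a in F, ((tl a == u) && (hd a == v)) || ((tl a == v) && (hd a == u))].

Definition is_tree (I : {set V}) (F : {set A}) : Prop :=
  I != set0 /\
  (forall a, a \in F -> (tl a \in I) && (hd a \in I)) /\
  #|F| = (#|I| - 1)%N /\
  (forall u v, u \in I -> v \in I -> connect (adjF F) u v).

End Network.

(* Give every row weight 1.  Since I1 and I2 partition the tree's node set I
   and the rows of I2 enter with the opposite sign and the factor (1 - y), the
   aggregated coefficient of y x_a is
     [a = l] sigma + s (1_I(t(a)) - 1_I(h(a))),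
   where s = +1 or -1 is the sign of the rows chosen for I1.  This vanishes on
   every arc with both ends in I, and on l exactly for the sign sigma
   prescribed in (i)-(iv).  Rooting the tree at the endpoint r of l
   inside I, the parent arcs of the nodes of I - r are |I| - 1 distinct non-loop
   arcs with both ends in I; together with l they give the |I| cancellations
   required by (C1), and each node of I is an endpoint of one of them (r is an
   endpoint of l), which gives (C2). *)

From HB Require Import structures.
From mathcomp Require Import all_boot all_order all_algebra.
From mathcomp Require Import reals ring.
Set Implicit Arguments. Unset Strict Implicit. Unset Printing Implicit Defensive.
Import Order.TTheory GRing.Theory Num.Theory.
Local Open Scope ring_scope.

Lemma connect_rank (T : finType) (e : rel T) (r : T) :
  exists d : T -> nat,
    forall v, connect e v r -> v != r -> exists2 u, e v u & (d u < d v)%N.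
Proof.
pose P v n := [exists p : n.-tuple T, path e v p && (last v p == r)]
              || ~~ connect e v r.
have P_ex v : exists n, P v n.
  case: (boolP (connect e v r)) => [/connectP[p ep lp] | ncon].
    exists (size p); apply/orP; left; apply/existsP.
    by exists (in_tuple p); rewrite /= ep -lp eqxx.
  by exists 0%N; rewrite /P ncon orbT.
exists (fun v => ex_minn (P_ex v)) => v con_vr v_r.
case: ex_minnP => n; rewrite /P con_vr orbF => /existsP[[[|u p] /= /eqP <-]].
  by rewrite (negbTE v_r).
case/andP=> /andP[e_vu pu] lu _; exists u => //.
case: ex_minnP => m _ /(_ (size p)); apply.
by apply/orP; left; apply/existsP; exists (in_tuple p); rewrite /= pu lu.
Qed.

Section ParentArcs.
Variables (V A : finType) (tl hd : A -> V).

Definition joins (a : A) (u v : V) : bool :=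
  ((tl a == u) && (hd a == v)) || ((tl a == v) && (hd a == u)).

Lemma joins_other a v u w u' :
  joins a v u -> joins a w u' -> v != w -> (w == u) && (v == u').
Proof.
by rewrite /joins => /orP[]/andP[/eqP<- /eqP<-] /orP[]/andP[/eqP<- /eqP<-];
  rewrite ?eqxx.
Qed.

Lemma cut_arc_endpoint (I : {set V}) (l : A) :
  (tl l \in I) != (hd l \in I) -> exists2 r, r \in I & (tl l == r) != (hd l == r).
Proof.
move=> l_cut; have tl_hd : tl l != hd l by apply: contraNneq l_cut => ->.
case hI: (hd l \in I); [exists (hd l) | exists (tl l)]; rewrite // ?eqxx.
- by rewrite (negbTE tl_hd).
- by move: l_cut; rewrite hI; case: (tl l \in I).
- by rewrite [hd l == _]eq_sym (negbTE tl_hd).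
Qed.

Lemma connect_parent_arcs (I : {set V}) (F : {set A}) (r : V) (a0 : A) :
  (forall v, v \in I -> connect (adjF tl hd F) v r) ->
  exists f : V -> A, {in I :\ r &, injective f} /\
    forall v, v \in I :\ r -> (f v \in F) && ((tl (f v) == v) != (hd (f v) == v)).
Proof.
move=> con_r; have [d d_desc] := connect_rank (adjF tl hd F) r.
pose parent_arc v a := (a \in F) && [exists u, (d u < d v)%N && joins a v u].
have parent_arcP v : v \in I :\ r -> parent_arc v (odflt a0 [pick a | parent_arc v a]).
  rewrite in_setD1 => /andP[v_r vI].
  have [u /existsP[a /andP[aF j_avu]] d_uv] := d_desc v (con_r v vI) v_r.
  case: pickP => [//|/(_ a)]; rewrite /parent_arc aF /=.
  by case/existsP; exists u; rewrite d_uv.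
exists (fun v => odflt a0 [pick a | parent_arc v a]); split.
  (* An arc shared by v != w would make each of v, w strictly closer to r. *)
  move=> v w /parent_arcP + /parent_arcP + f_vw; rewrite -f_vw.
  case/andP=> _ /existsP[u /andP[d_uv j_vu]] /andP[_ /existsP[u' /andP[d_uw j_wu]]].
  apply/eqP/negPn/negP => v_w; case/andP: (joins_other j_vu j_wu v_w).
  move=> /eqP wu /eqP vu; move: d_uw; rewrite wu -vu => /(ltn_trans d_uv).
  by rewrite ltnn.
move=> v /parent_arcP/andP[-> /existsP[u /andP[d_uv]]] /=.
have u_v : (u == v) = false by apply: contraTF d_uv => /eqP->; rewrite ltnn.
by case/orP=> /andP[/eqP-> /eqP->]; rewrite eqxx u_v.
Qed.

End ParentArcs.

Section UnitWeights.
Variables (R : realType) (V A : finType) (tl hd : A -> V).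
Variables (I1 I2 : {set V}) (s : bool).
Hypothesis I12_disjoint : I1 :&: I2 = set0.

Local Notation sgn b := (if b then 1 else -1 : R).
Local Notation I := (I1 :|: I2).
Local Notation P := [set (i, s) | i in I1].
Local Notation Q := [set (i, ~~ s) | i in I2].
Local Notation canceled1 l sigma :=
  (canceled tl hd l sigma P Q (fun=> 1 : R) (fun=> 1)).

Lemma Erow_neq0 t a : (Erow R tl hd t a != 0) = ((tl a == t.1) != (hd a == t.1)).
Proof.
rewrite /Erow; case: t => i [] /=; case: (tl a == i); case: (hd a == i);
  by rewrite /= ?subrr ?subr0 ?sub0r ?mulr0 ?mul1r ?mulN1r ?oppr_eq0 ?oppr0 ?eqxx ?oner_eq0.
Qed.

Lemma sum_natr_eq (S : {set V}) (x : V) :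
  \sum_(i in S) ((x == i)%:R : R) = (x \in S)%:R.
Proof.
have [xS | xNS] := boolP (x \in S).
  rewrite (bigD1 x) //= eqxx big1 ?addr0 // => i /andP[_ ix].
  by rewrite eq_sym (negbTE ix).
by rewrite big1 // => i iS; case: eqP => // xi; rewrite xi iS in xNS.
Qed.

Lemma sum_Erow_rows (S : {set V}) (b : bool) a :
  \sum_(t in [set (i, b) | i in S]) Erow R tl hd t a =
  sgn b * ((tl a \in S)%:R - (hd a \in S)%:R).
Proof.
rewrite big_imset /=; last by move=> i j _ _ [].
by rewrite -mulr_sumr sumrB !sum_natr_eq.
Qed.

Lemma natr_in_setU x : ((x \in I1)%:R + (x \in I2)%:R : R) = (x \in I)%:R.
Proof.
rewrite inE; have [x1 | _] /= := boolP (x \in I1); last by rewrite add0r.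
suff -> : x \in I2 = false by rewrite addr0.
by apply/negP => x2; have := in_set0 x; rewrite -I12_disjoint inE x1 x2.
Qed.

Lemma total_coef_unit l sigma a :
  total_coef tl hd l sigma P Q (fun=> 1) (fun=> 1) a =
  (if a == l then sgn sigma else 0) + sgn s * ((tl a \in I)%:R - (hd a \in I)%:R).
Proof.
rewrite /total_coef; under eq_bigr do rewrite mul1r.
under [X in _ - X]eq_bigr do rewrite mul1r.
rewrite !sum_Erow_rows -!natr_in_setU -addrA; congr (_ + _).
by case: s => /=; ring.
Qed.

Lemma appears_row l a i :
  i \in I -> (tl a == i) != (hd a == i) ->
  appears tl hd l P Q (fun=> 1 : R) (fun=> 1) a.
Proof.
rewrite inE => iI a_i; apply/or3P; case/orP: iI => [i1 | i2].
  by apply: Or32; apply/existsP; exists (i, s); rewrite imset_f //= mul1r Erow_neq0.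
by apply: Or33; apply/existsP; exists (i, ~~ s);
  rewrite imset_f //= mulN1r oppr_eq0 Erow_neq0.
Qed.

Lemma canceled_inner l sigma a i :
  a != l -> tl a \in I -> hd a \in I -> i \in I -> (tl a == i) != (hd a == i) ->
  canceled1 l sigma a.
Proof.
move=> a_l tI hI iI a_i; rewrite /canceled (appears_row _ iI a_i).
by rewrite total_coef_unit (negbTE a_l) tI hI subrr mulr0 addr0 eqxx.
Qed.

Lemma canceled_cut l sigma :
  (tl l \in I) != (hd l \in I) -> sigma = (s == (hd l \in I)) -> canceled1 l sigma l.
Proof.
rewrite /canceled /appears eqxx total_coef_unit eqxx => + ->.
by case: (tl l \in I); case: (hd l \in I); case: s;
  rewrite //= ?subrr ?subr0 ?sub0r ?mulr1 ?mulrN1 ?opprK ?addrN ?addNr.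
Qed.

Lemma ECR_assignment_unit_weights l sigma :
  canceled1 l sigma l ->
  (#|I| <= #|[set a | canceled1 l sigma a]|)%N ->
  (forall i b, i \in I -> exists a, canceled1 l sigma a && (Erow R tl hd (i, b) a != 0)) ->
  ECR_assignment R tl hd l sigma P Q.
Proof.
move=> can_l card_can row_can; split.
  apply/pred0P => t /=; apply/negP => /andP[/imsetP[i _ ->] /imsetP[j _ [_]]].
  by case: s.
exists (fun=> 1), (fun=> 1).
split; first by move=> *; apply: ltr01.
split; first by move=> *; apply: ltr01.
split.
  rewrite !card_imset; try by move=> x y [].
  by rewrite -[(_ + _)%N]subn0 -(cards0 V) -I12_disjoint -cardsU.
move=> _; do 2!split => //.
  move=> _ /imsetP[i i1 ->].
  have [|a /andP[ca ea]] := row_can i s; first by rewrite inE i1.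
  by exists a; rewrite ca mul1r.
move=> _ /imsetP[i i2 ->].
have [|a /andP[ca ea]] := row_can i (~~ s); first by rewrite inE i2 orbT.
by exists a; rewrite ca mulN1r oppr_eq0.
Qed.

Lemma tree_ECR_assignment (F : {set A}) l sigma :
  is_tree tl hd I F -> (tl l \in I) != (hd l \in I) -> sigma = (s == (hd l \in I)) ->
  ECR_assignment R tl hd l sigma P Q.
Proof.
move=> [_ [F_in [_ con]]] l_cut sigmaE.
have [r rI l_r] := cut_arc_endpoint l_cut.
have [f [f_inj f_arc]] := connect_parent_arcs l (fun v vI => con v r vI rI).
have f_l v : v \in I :\ r -> f v != l.
  case/f_arc/andP=> /F_in ends _; apply: contraNneq l_cut => <-.
  by case/andP: ends => -> ->.
have can_f v : v \in I :\ r -> canceled1 l sigma (f v).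
  move=> vIr; have /andP[/F_in/andP[tI hI] f_v] := f_arc v vIr.
  by apply: canceled_inner f_v; rewrite ?f_l //; case/setD1P: vIr.
have can_l := canceled_cut l_cut sigmaE.
apply: ECR_assignment_unit_weights => //.
  have l_notin : l \notin f @: (I :\ r).
    by apply/imsetP => -[v vIr lE]; move: (f_l v vIr); rewrite -lE eqxx.
  apply: (leq_trans _ (subset_leq_card (_ : l |: f @: (I :\ r) \subset _))).
    by rewrite cardsU1 l_notin card_in_imset // (cardsD1 r I) rI.
  apply/subsetP => a; rewrite !inE => /orP[/eqP-> // | /imsetP[v vIr ->]].
  exact: can_f.
move=> i b iI; have [-> | i_r] := eqVneq i r; first by exists l; rewrite can_l Erow_neq0.
have iIr : i \in I :\ r by rewrite in_setD1 i_r iI.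
by exists (f i); rewrite can_f // Erow_neq0; case/andP: (f_arc i iIr).
Qed.

End UnitWeights.

Theorem theorem2 (R : realType) (V A : finType) (tl hd : A -> V)
    (I : {set V}) (F : {set A}) (l : A) :
  is_tree tl hd I F ->
  (tl l \in I) != (hd l \in I) ->
  forall I1 I2 : {set V}, I1 :&: I2 = set0 -> I1 :|: I2 = I ->
  (hd l \in I -> ECR_assignment R tl hd l true
                   [set (i, true) | i in I1] [set (i, false) | i in I2]) /\
  (hd l \in I -> ECR_assignment R tl hd l false
                   [set (i, false) | i in I1] [set (i, true) | i in I2]) /\
  (tl l \in I -> ECR_assignment R tl hd l true
                   [set (i, false) | i in I1] [set (i, true) | i in I2]) /\
  (tl l \in I -> ECR_assignment R tl hd l false
                   [set (i, true) | i in I1] [set (i, false) | i in I2]).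
Proof.
move=> tree l_cut I1 I2 I12_disjoint I12E; subst I.
have hd_out : tl l \in I1 :|: I2 -> (hd l \in I1 :|: I2) = false.
  by move=> tI; move: l_cut; rewrite tI; case: (hd l \in _).
split; [|split; [|split]] => endI.
- by apply: (tree_ECR_assignment R (s := true) I12_disjoint tree) => //; rewrite endI.
- by apply: (tree_ECR_assignment R (s := false) I12_disjoint tree) => //; rewrite endI.
- by apply: (tree_ECR_assignment R (s := false) I12_disjoint tree) => //; rewrite hd_out.
- by apply: (tree_ECR_assignment R (s := true) I12_disjoint tree) => //; rewrite hd_out.
Qed.
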